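(* Let $n\ge1$ and let $c\in\mathfrak{S}_{n+1}$ be a Coxeter element. For every $k\in\{1,\ldots,n\}$, \[\#D_k(\boldsymbol\lambda(c))=\min\bigl(\#\{\ell\in\mathbf L_c\cup\{1\}:\ell\leqslant k\},\ \#\{r\in\mathbf R_c\cup\{n+1\}:r>k\}\bigr).\]
   Context: $s_i=(i,i+1)$; a Coxeter element of $\mathfrak{S}_{n+1}$ is a product of $s_1,\dots,s_n$, each exactly once. It is a long cycle $c=(c_1,\dots,c_m,c_{m+1},\dots,c_{n+1})$ with $c_1=1<c_2<\dots<c_m=n+1>c_{m+1}>\dots>c_{n+1}>1$; $\mathbf L_c=\{c_2,\dots,c_{m-1}\}$, $\mathbf R_c=\{c_{m+1},\dots,c_{n+1}\}$. With $\mathbf L=\mathbf L_c\cup\{1\}=\{\ell_1<\dots<\ell_p\}$ and $\mathbf R=\mathbf R_c\cup\{n+1\}$, $\boldsymbol\lambda(c)$ is the partition with parts $\#\{r\in\mathbf R:\ell_i<r\}$, $i=1,\dots,p$. For a partition $\lambda$ with Ferrers diagram $\mathrm{Fer}(\lambda)=\{(i,j):j\le\lambda_i\}$, $D_k(\lambda)=\{(i,j)\in\mathrm{Fer}(\lambda):\lambda_1+i-j=k\}$. *)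

From HB Require Import structures.
From mathcomp Require Import all_boot all_order all_fingroup.
Set Implicit Arguments. Unset Strict Implicit. Unset Printing Implicit Defensive.

(* Convention: S_{n+1} is {perm 'I_n.+1}; the ordinal x : 'I_n.+1 represents
   the integer x+1 in {1,...,n+1}.  So ord0 represents 1 and ord_max represents n+1. *)

Definition sgen (n i : nat) : {perm 'I_n.+1} :=
  tperm (inord i.-1 : 'I_n.+1) (inord i).

Definition coxeter (n : nat) (c : {perm 'I_n.+1}) : Prop :=
  exists s : seq nat, perm_eq s (iota 1 n) /\ c = (\prod_(i <- s) sgen n i)%g.

(* Writing c as the cycle (c_1 = 1, c_2, ..., c_{n+1}) starting at 1, the
   position of the 1-based integer i in that cycle is findex c ord0 (inord i.-1).
   L_c = {c_2,...,c_{m-1}} : the elements of {2..n} occurring strictly before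
   c_m = n+1;  R_c = {c_{m+1},...,c_{n+1}} : those occurring after n+1. *)
Definition pos_in_cycle (n : nat) (c : {perm 'I_n.+1}) (i : nat) : nat :=
  findex c ord0 (inord i.-1).

Definition in_Lc (n : nat) (c : {perm 'I_n.+1}) (i : nat) : bool :=
  (1 < i <= n) && (pos_in_cycle c i < pos_in_cycle c n.+1).

Definition in_Rc (n : nat) (c : {perm 'I_n.+1}) (i : nat) : bool :=
  (1 < i <= n) && (pos_in_cycle c n.+1 < pos_in_cycle c i).

Definition Lseq (n : nat) (c : {perm 'I_n.+1}) : seq nat :=
  [seq i <- iota 1 n.+1 | (i == 1) || in_Lc c i].
Definition Rseq (n : nat) (c : {perm 'I_n.+1}) : seq nat :=
  [seq i <- iota 1 n.+1 | (i == n.+1) || in_Rc c i].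

Definition lambda (n : nat) (c : {perm 'I_n.+1}) : seq nat :=
  [seq count (fun r => l < r) (Rseq c) | l <- Lseq c].

Definition Dk (lam : seq nat) (k : nat) : seq (nat * nat) :=
  [seq ij <- [seq (i, j) | i <- iota 1 (size lam), j <- iota 1 (nth 0 lam i.-1)]
     | head 0 lam + ij.1 == k + ij.2].

From mathcomp Require Import all_boot all_order all_fingroup.
From mathcomp Require Import zify.
Set Implicit Arguments. Unset Strict Implicit. Unset Printing Implicit Defensive.

(* As c is an (n+1)-cycle, distinct integers have distinct positions in it, so
   R = R_c u {n+1} is the complement of L = L_c u {1} in {1,...,n+1}.  Let
   a(m), b(m) count the elements of L, R in {1,...,m}.  Since 1 is in L,
   lambda_1 = b(n+1); moreover a(l_i) = i and lambda_i = b(n+1) - b(l_i).  So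
   D_k meets row i in column b(n+1) + i - k, which exists iff l_i <= k and
   k < b(n+1) + i.  With a = a(k) and b = b(n+1) - b(k) these are the rows
   i <= a with i > a - b: there are min(a, b) of them.
   That c is a single cycle comes from counting cycles: multiplying a product
   of the other generators by s_i merges the cycles of i and i+1, which are
   distinct because those generators preserve {1,...,i}. *)

Section CountIota.
Variable Q : pred nat.

Lemma leq_count_iota m m' : m <= m' -> count Q (iota 1 m) <= count Q (iota 1 m').
Proof. by move=> le_mm'; rewrite -(subnKC le_mm') iotaD count_cat leq_addr. Qed.

Lemma count_iota_leq m N : m <= N ->
  count (fun x => (x <= m) && Q x) (iota 1 N) = count Q (iota 1 m).
Proof.
move=> le_mN; rewrite -(subnKC le_mN) iotaD count_cat.
rewrite (@eq_in_count _ _ Q (iota 1 m)); last first.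
  by move=> x; rewrite mem_iota => /andP[_ ltx]; rewrite -ltnS -[m.+1]add1n ltx.
rewrite (@eq_in_count _ _ pred0 (iota (1 + m) _)) ?count_pred0 ?addn0 //.
by move=> x; rewrite mem_iota add1n => /andP[ltmx _]; rewrite leqNgt ltmx.
Qed.

Lemma count_iota_gtn m N : m <= N ->
  count (fun x => (m < x) && Q x) (iota 1 N) = count Q (iota 1 N) - count Q (iota 1 m).
Proof.
move=> le_mN; rewrite -(subnKC le_mN) iotaD !count_cat addKn.
rewrite (@eq_in_count _ _ pred0 (iota 1 m)); last first.
  by move=> x; rewrite mem_iota add1n ltnS => /andP[_ lexm]; rewrite ltnNge lexm.
rewrite count_pred0; apply: eq_in_count => x.
by rewrite mem_iota add1n => /andP[ltmx _]; rewrite ltmx.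
Qed.

Lemma count_iota_rank_leq l k : Q l ->
  (l <= k) = (count Q (iota 1 l) <= count Q (iota 1 k)).
Proof.
move=> Ql; case: leqP => [lelk|ltkl]; first by rewrite leq_count_iota.
apply/esym/negbTE; rewrite -ltnNge.
case: l ltkl Ql => // l ltkl Ql.
rewrite -[l.+1]addn1 iotaD count_cat /= add1n Ql addn1 ltnS.
exact: leq_count_iota.
Qed.

Lemma count_iota_index l N : l \in [seq x <- iota 1 N | Q x] ->
  count Q (iota 1 l) = (index l [seq x <- iota 1 N | Q x]).+1.
Proof.
elim: N => [|N IH] //; rewrite -[N.+1]addn1 iotaD filter_cat /= add1n.
case: ifP => QN; last by rewrite cats0.
rewrite mem_cat index_cat inE.
case: (boolP (l \in _)) => [lF _|_ /eqP ->]; first exact: IH.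
by rewrite -[N.+1]addn1 iotaD count_cat /= add1n QN eqxx size_filter !addn1 addn0.
Qed.

End CountIota.

Lemma count_iota_ltn_add a b : count (fun i => a < b + i) (iota 1 a) = minn a b.
Proof.
elim: a => [|a IH] /=; first by rewrite min0n.
rewrite (iotaDl 1 1 a) count_map.
rewrite (@eq_count _ _ (fun i => a < b + i)); last by move=> i /=; rewrite addnS ltnS.
by rewrite IH; case: (ltnP a b) => h; lia.
Qed.

Lemma size_Dk (lam : seq nat) k :
  size (Dk lam k) =
  count (fun i => head 0 lam + i \in iota k.+1 (nth 0 lam i.-1)) (iota 1 (size lam)).
Proof.
rewrite /Dk size_filter count_flatten -sumn_count -map_comp; congr sumn.
apply: eq_map => i /=; rewrite count_map -count_uniq_mem ?iota_uniq //.
by rewrite -[k.+1]addn1 (iotaDl k) count_map; apply: eq_count => j; rewrite /= eq_sym.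
Qed.

Section SplitShape.
Variables (P : pred nat) (N : nat).
Hypothesis P1 : P 1.

Local Notation L := [seq l <- iota 1 N | P l].
Local Notation R := [seq r <- iota 1 N | ~~ P r].
Local Notation lam := [seq count (fun r => l < r) R | l <- L].
Local Notation rankL m := (count P (iota 1 m)).
Local Notation rankR m := (count (predC P) (iota 1 m)).

Lemma count_leq_split m : m <= N -> count (fun l => l <= m) L = rankL m.
Proof. by move=> le_mN; rewrite count_filter; apply: count_iota_leq. Qed.

Lemma count_gtn_split m : m <= N -> count (fun r => m < r) R = rankR N - rankR m.
Proof. by move=> le_mN; rewrite count_filter; apply: count_iota_gtn. Qed.

Lemma head_split_shape : head 0 lam = rankR N.
Proof.
case: (posnP N) => [-> // | N_gt0].
have -> : L = 1 :: [seq l <- iota 2 N.-1 | P l] by rewrite -(prednK N_gt0) /= P1.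
by rewrite /= count_gtn_split //= P1 subn0.
Qed.

Lemma split_shape_diagonal k : k <= N -> {in iota 1 (size L), forall i,
  (head 0 lam + i \in iota k.+1 (nth 0 lam i.-1)) =
  (i <= rankL k) && (rankL k < rankR N - rankR k + i)}.
Proof.
move=> le_kN i; rewrite mem_iota add1n ltnS => /andP[i_gt0 le_i_sL].
have lt_i1_sL : i.-1 < size L by rewrite prednK.
set l := nth 0 L i.-1.
have lL : l \in L by apply: mem_nth.
have rank_l : rankL l = i.
  rewrite (count_iota_index lL) index_uniq ?prednK //.
  exact/filter_uniq/iota_uniq.
move: (lL); rewrite mem_filter mem_iota add1n ltnS => /andP[Pl /andP[l_gt0 le_lN]].
rewrite (nth_map 0) // head_split_shape count_gtn_split // mem_iota.
have <- : (l <= k) = (i <= rankL k) by rewrite -rank_l -count_iota_rank_leq.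
have splitl := count_predC P (iota 1 l); have splitk := count_predC P (iota 1 k).
have le_lRN : rankR l <= rankR N by apply: leq_count_iota.
have le_kRN : rankR k <= rankR N by apply: leq_count_iota.
rewrite !size_iota in splitl splitk.
rewrite -/l; apply/idP/idP; lia.
Qed.

Lemma size_Dk_split_shape k : k <= N ->
  size (Dk lam k) = minn (count (fun l => l <= k) L) (count (fun r => k < r) R).
Proof.
move=> le_kN; rewrite size_Dk size_map count_leq_split // count_gtn_split //.
rewrite (eq_in_count (split_shape_diagonal le_kN)) size_filter count_iota_leq.
  exact: count_iota_ltn_add.
exact: leq_count_iota.
Qed.

End SplitShape.

Lemma card_porbits_perm1 (T : finType) : #|porbits (1 : {perm T})| = #|T|.
Proof.
rewrite /porbits card_imset // => x y /eqP.
by rewrite eq_porbit_mem => /porbitP[i ->]; rewrite expg1n perm1.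
Qed.

Lemma porbit_ltn_stable n (p : {perm 'I_n.+1}) j x y :
  (forall z, (p z < j) = (z < j)) -> y \in porbit p x -> (y < j) = (x < j).
Proof.
by move=> p_stable /porbitP[i ->]; rewrite permX; elim: i => //= i <-.
Qed.

Lemma sgen_ltn_stable n i j (x : 'I_n.+1) : i <= n -> i != j ->
  (sgen n i x < j) = (x < j).
Proof.
move=> le_in /eqP neq_ij; rewrite /sgen.
by case: tpermP => [->|->|//]; rewrite !inordK; lia.
Qed.

Lemma prod_sgen_ltn_stable n (s : seq nat) j (x : 'I_n.+1) :
  all (fun i => i <= n) s -> j \notin s ->
  ((\prod_(i <- s) sgen n i)%g x < j) = (x < j).
Proof.
elim: s x => [|a s IH] x /=; first by rewrite big_nil perm1.
rewrite in_cons negb_or big_cons permM => /andP[le_an le_sn] /andP[neq_ja notin_js].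
by rewrite IH // sgen_ltn_stable // eq_sym.
Qed.

Lemma card_porbits_prod_sgen n (s : seq nat) :
  uniq s -> all (fun i => 0 < i <= n) s ->
  #|porbits (\prod_(i <- s) sgen n i)%g| + size s = n.+1.
Proof.
elim: s => [|a s IH] /=; first by rewrite big_nil card_porbits_perm1 card_ord addn0.
case/andP=> notin_as uniq_s /andP[/andP[a_gt0 le_an] range_s].
rewrite big_cons; set p := (\prod_(i <- s) sgen n i)%g.
have p_stable z : (p z < a) = (z < a).
  apply: prod_sgen_ltn_stable notin_as.
  by apply: sub_all range_s => i /andP[].
have val_pred : (inord a.-1 : 'I_n.+1) = a.-1 :> nat by rewrite inordK; lia.
have val_a : (inord a : 'I_n.+1) = a :> nat by rewrite inordK.
have split_orbits : (inord a.-1 : 'I_n.+1) \notin porbit p (inord a).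
  by apply/negP => /(porbit_ltn_stable p_stable); rewrite val_pred val_a ltnn; lia.
have neq_pred_a : (inord a.-1 : 'I_n.+1) != inord a.
  by apply/eqP => /(congr1 val); rewrite /= val_pred val_a; lia.
have := porbits_mul_tperm p (inord a.-1) (inord a).
rewrite split_orbits neq_pred_a -/(sgen n a) /=.
have := IH uniq_s range_s; rewrite -/p.
(* lia sees two non-syntactically-equal copies of #|porbits p| otherwise *)
set orbits_p := #|porbits p|; lia.
Qed.

Lemma coxeter_fconnect n (c : {perm 'I_n.+1}) : coxeter c -> forall x, fconnect c ord0 x.
Proof.
case=> s [perm_s ->] x; set p := (\prod_(i <- s) sgen n i)%g.
have uniq_s : uniq s by rewrite (perm_uniq perm_s) iota_uniq.
have range_s : all (fun i => 0 < i <= n) s.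
  by apply/allP => i; rewrite (perm_mem perm_s) mem_iota add1n ltnS.
have := card_porbits_prod_sgen uniq_s range_s.
rewrite -/p (perm_size perm_s) size_iota => card_p.
have one_orbit : #|porbits p| <= 1 by rewrite -(leq_add2r n) card_p add1n.
have orbit_x : porbit p x = porbit p ord0.
  by apply: (card_le1_eqP one_orbit); apply: imset_f.
have : x \in porbit p ord0 by rewrite -orbit_x porbit_id.
by case/porbitP => i ->; rewrite permX fconnect_iter.
Qed.

Lemma pos_in_cycle_inj n (c : {perm 'I_n.+1}) i j : coxeter c ->
  0 < i <= n.+1 -> 0 < j <= n.+1 -> pos_in_cycle c i = pos_in_cycle c j -> i = j.
Proof.
move=> /coxeter_fconnect conn range_i range_j eq_pos.
have : (inord i.-1 : 'I_n.+1) = inord j.-1.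
  by rewrite -(iter_findex (conn (inord i.-1))) [findex _ _ _]eq_pos iter_findex.
by move=> /(congr1 val); rewrite /= !inordK; lia.
Qed.

Lemma Rseq_coxeter n (c : {perm 'I_n.+1}) : coxeter c -> 0 < n ->
  Rseq c = [seq i <- iota 1 n.+1 | ~~ ((i == 1) || in_Lc c i)].
Proof.
move=> cox n_gt0; apply: eq_in_filter => i; rewrite mem_iota add1n ltnS => range_i.
have [->|neq_i1] := eqVneq i 1; first by rewrite /in_Rc ltnn /=; apply/negbTE; lia.
have [->|neq_iN] := eqVneq i n.+1; first by rewrite /in_Lc ltnn andbF.
have range_i' : 1 < i <= n by lia.
have neq_pos : pos_in_cycle c n.+1 != pos_in_cycle c i.
  apply: contra_neq neq_iN => eq_pos.
  by apply/esym; apply: (pos_in_cycle_inj cox _ range_i eq_pos); rewrite leqnn.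
by rewrite /in_Rc /in_Lc range_i' /= ltn_neqAle -leqNgt neq_pos.
Qed.

Theorem lemma3p13 (n : nat) (c : {perm 'I_n.+1}) :
  1 <= n -> coxeter c ->
  forall k : nat, 1 <= k <= n ->
    size (Dk (lambda c) k) =
    minn (count (fun l => l <= k) (Lseq c)) (count (fun r => k < r) (Rseq c)).
Proof.
(* The identity holds for k = 0 as well. *)
move=> n_gt0 cox k /andP[_ le_kn].
rewrite /lambda (Rseq_coxeter cox n_gt0).
by apply: (size_Dk_split_shape (P := fun i => (i == 1) || in_Lc c i)); rewrite ?leqW.
Qed.
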